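(* Let $G$ be a combinatorial 4-PPT of the interior of a simple cycle $C$ with $b$ vertices, of which $c$ have their reflex angle inside the cycle. Then the number $t$ of triangular faces of $G$ is $t=b-2c-2$.
   Context: An angle is a vertex–face incidence of a plane embedded graph. A combinatorial 4-PPT of the interior of a simple cycle $C$ means: a plane simple graph $G$ whose outer face is bounded by the simple cycle $C$, all of whose interior faces have size 3 or 4, with a tag ''reflex'' or ''convex'' on each interior angle such that every interior face has exactly three convex angles, every vertex not on $C$ is incident to exactly one reflex angle, and every vertex of $C$ is incident to at most one reflex angle (a vertex of $C$ ''has its reflex angle inside the cycle'' if it has a reflex-tagged angle in an interior face; the other vertices of $C$ have their reflex angle outside). For instance, $C$ together with everything inside it in a combinatorial 4-PPT (a combinatorial pointed pseudo-triangulation with interior faces of size 3 or 4) is such a structure. *)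

(* A plane graph is represented combinatorially by a
   hypermap (rotation system) in the style of Gonthier's four-colour
   development: a finite set of darts with permutations edge/node/face
   satisfying node (face (edge x)) = x.  Vertices = node-orbits,
   edges = edge-orbits, faces = face-orbits, and each dart is an angle
   (a vertex-face incidence). *)
From mathcomp Require Import all_boot all_algebra.
Set Implicit Arguments. Unset Strict Implicit. Unset Printing Implicit Defensive.

Section PlaneMap.
Variables (D : finType) (edge node face : D -> D).

Definition hypermap_ax := forall x, node (face (edge x)) = x.

Definition glink : rel D :=
  [rel x y | [|| edge x == y, node x == y | face x == y]].
Definition map_connected := forall x y, connect glink x y.

(* genus 0 (Euler formula V + F + E = #darts + 2, i.e. V - E + F = 2
   for a plain map where #darts = 2E): the map is embedded in the sphere *)
Definition genus0 :=
  fcard node (predT : pred D) + fcard face (predT : pred D)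
    + fcard edge (predT : pred D) = #|D| + 2.

Definition plain := forall x, edge (edge x) = x /\ edge x != x.

Definition loopless := forall x, ~~ fconnect node x (edge x).
Definition no_multi_edges := forall x y,
  fconnect node x y -> fconnect node (edge x) (edge y) -> x = y.

Definition plane_simple_graph :=
  [/\ hypermap_ax, map_connected, genus0, plain &
      (loopless /\ no_multi_edges)].

Variable o : D.

Definition outer (x : D) := fconnect face o x.
Definition interior (x : D) := ~~ outer x.

(* the outer face is bounded by a simple cycle *)
Definition outer_simple_cycle :=
  3 <= order face o /\
  (forall x y, outer x -> outer y -> fconnect node x y -> x = y).

Definition on_C (x : D) := [exists y, outer y && fconnect node x y].

(* combinatorial 4-PPT of the interior of C, with reflex tags r on angles *)
Definition comb_4PPT_interior (r : pred D) :=
  [/\ plane_simple_graph /\ outer_simple_cycle,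
      (forall x, interior x -> order face x \in [:: 3; 4]),
      (forall x, interior x -> #|[pred y | fconnect face x y && ~~ r y]| = 3),
      (forall x, ~~ on_C x ->
         #|[pred y | fconnect node x y && interior y && r y]| = 1) &
      (forall x, on_C x ->
         #|[pred y | fconnect node x y && interior y && r y]| <= 1)].

Definition nb_C := order face o.

(* c = number of vertices of C with their reflex angle inside C
   (outer darts are at pairwise distinct vertices) *)
Definition nb_reflex_inside (r : pred D) :=
  #|[pred x | outer x &&
       [exists y, fconnect node x y && interior y && r y]]|.

Definition nb_triangles :=
  fcard face [pred x | interior x && (order face x == 3)].

End PlaneMap.

From mathcomp Require Import all_boot all_algebra zify.
Set Implicit Arguments. Unset Strict Implicit. Unset Printing Implicit Defensive.

(* Double counting of angles.  Each interior face has three convex angles, so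
   the i interior angles number 3(t + q) + R, with q the quadrilaterals and R
   the interior reflex angles; as faces have size 3 or 4, also i = 3t + 4q,
   whence R = q.  Every vertex off C, and exactly c vertices of C, carry one
   interior reflex angle, so R = V_in + c, while the b outer angles sit at the
   b distinct vertices of C.  With 2E = i + b and Euler's formula
   V + F = E + 2, where V = b + V_in and F = 1 + t + q, this gives
   t = b - 2c - 2. *)

Section Hypermap.
Variables (T : finType) (edge node face : T -> T).
Hypothesis edgeK : hypermap_ax edge node face.

Lemma hypermap_edge_inj : injective edge.
Proof. by move=> x y exy; rewrite -[x]edgeK -[y]edgeK exy. Qed.

Let faceK : cancel node (face \o edge).
Proof.
have fe_inj : injective (face \o edge) by apply: (can_inj (g := node)).
by apply/(bij_can_sym (injF_bij fe_inj)) => x; apply: edgeK.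
Qed.

Lemma hypermap_node_inj : injective node.
Proof. exact: can_inj faceK. Qed.

Lemma hypermap_face_inj : injective face.
Proof.
have en_inj : injective (edge \o node).
  exact: inj_comp hypermap_edge_inj hypermap_node_inj.
apply: (can_inj (g := edge \o node)).
by apply/(bij_can_sym (injF_bij en_inj)) => x; apply: faceK.
Qed.

End Hypermap.

Section UniformOrbits.
Variables (T : finType) (f : T -> T).
Hypothesis f_inj : injective f.

Lemma card_fclosed_uniform (a : {pred T}) (P : pred T) k :
    fclosed f a -> {in a, forall x, #|[predI fconnect f x & P]| = k} ->
  #|[predI a & P]| = fcard f a * k.
Proof.
move=> cl_a Pk; have sym := fconnect_sym f_inj.
pose b := [predI froots f & a].
rewrite -sum1_card (partition_big (froot f) b) => [|y /andP[ay _]]; last first.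
  rewrite !inE (roots_root sym) /=.
  by rewrite -(closed_connect cl_a (connect_root _ y)).
rewrite -sum_nat_const; apply: eq_bigr => x /andP[/eqP rx ax].
rewrite sum1_card -(Pk x ax); apply: eq_card => y; rewrite !inE /=.
rewrite unfold_in !inE -{1}rx (root_connect sym) sym andbC andbA.
by case xy: (fconnect f x y); rewrite //= -(closed_connect cl_a xy) ax.
Qed.

Lemma fconnect_order x y : fconnect f x y -> order f y = order f x.
Proof.
by move=> xy; apply/esym/eq_card/(same_connect (fconnect_sym f_inj) xy).
Qed.

Lemma order_involution x : f (f x) = x -> f x != x -> order f x = 2.
Proof.
move=> ffx fx_x; have cyc : fcycle f [:: x; f x] by rewrite /= ffx !eqxx.
by rewrite (order_cycle cyc) ?inE ?eqxx //= inE andbT eq_sym.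
Qed.

Lemma fclosed_exists_fconnect (P : pred T) :
  fclosed f [pred x | [exists y, P y && fconnect f x y]].
Proof.
move=> x _ /eqP <-; rewrite !inE.
by apply: eq_existsb => y; rewrite -(same_fconnect1 f_inj).
Qed.

Lemma fclosedI (a b : {pred T}) :
  fclosed f a -> fclosed f b -> fclosed f [predI a & b].
Proof. by move=> cl_a cl_b x y xy; rewrite !inE (cl_a _ _ xy) (cl_b _ _ xy). Qed.

Lemma fclosed_order_set n : fclosed f (order_set f n).
Proof. by move=> x _ /eqP <-; rewrite !inE (fconnect_order (fconnect1 f x)). Qed.

Lemma fcardID (b a : {pred T}) :
  fcard f a = fcard f [predI a & b] + fcard f [predD a & b].
Proof.
rewrite /n_comp_mem -(cardID b); congr (_ + _); apply: eq_card => x.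
  by rewrite !inE andbA.
by rewrite !inE andbCA andbA.
Qed.
End UniformOrbits.

Section PPTCount.
Variables (D : finType) (edge node face : D -> D) (o : D) (r : pred D).
Hypotheses (edgeK : hypermap_ax edge node face) (euler : genus0 edge node face).
Hypotheses (plainD : plain edge) (simple_outer : outer_simple_cycle node face o).
Hypothesis face_size : forall x, interior face o x -> order face x \in [:: 3; 4].
Hypothesis face_convex :
  forall x, interior face o x -> #|[pred y | fconnect face x y && ~~ r y]| = 3.
Hypothesis reflex_off_C : forall x, ~~ on_C node face o x ->
  #|[pred y | fconnect node x y && interior face o y && r y]| = 1.
Hypothesis reflex_on_C : forall x, on_C node face o x ->
  #|[pred y | fconnect node x y && interior face o y && r y]| <= 1.

Let edge_inj := hypermap_edge_inj edgeK.
Let node_inj := hypermap_node_inj edgeK.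
Let face_inj := hypermap_face_inj edgeK.

Let outerD : {pred D} := outer face o.
Let inner : {pred D} := interior face o.
Let onC : {pred D} := on_C node face o.
Let inner_reflex : {pred D} := [predI inner & r].
Let reflex_at : {pred D} :=
  [pred x | [exists y, inner_reflex y && fconnect node x y]].
Let faces_of_size n : {pred D} := [predI inner & order_set face n].
Let nb_quads := fcard face (faces_of_size 4).

Lemma card_darts : #|D| = fcard edge (predT : pred D) * 2.
Proof.
rewrite -(@fcard_order_set _ _ edge_inj 2 predT) //; apply/subsetP => x _.
by have [edge2 edge_neq] := plainD x; rewrite inE order_involution.
Qed.

Lemma fclosed_outer : fclosed face outerD.
Proof. exact: connect_closed (fconnect_sym face_inj) o. Qed.

Lemma fclosed_interior : fclosed face inner.
Proof.
by move=> x y /fclosed_outer; rewrite !unfold_in /interior /outer => ->.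
Qed.

Lemma fcard_outer : fcard face outerD = 1.
Proof.
have [b_ge3 _] := simple_outer.
have b_gt0 : 0 < nb_C face o by apply: leq_trans b_ge3.
apply/eqP; rewrite -(eqn_pmul2r b_gt0) mul1n (fcard_order_set face_inj) //.
- by apply/subsetP => x ox; rewrite inE (fconnect_order face_inj ox).
- exact: fclosed_outer.
Qed.

Lemma fclosed_onC : fclosed node onC.
Proof. exact: fclosed_exists_fconnect node_inj (outer face o). Qed.

Lemma fclosed_reflex_at : fclosed node reflex_at.
Proof. exact: fclosed_exists_fconnect node_inj inner_reflex. Qed.

Lemma card_outer_at x : x \in onC -> #|[predI fconnect node x & outerD]| = 1.
Proof.
case/existsP => y0 /andP[oy0 xy0]; rewrite -(card1 y0); apply: eq_card => y.
rewrite !inE; apply/andP/eqP => [[xy oy] | ->]; last by [].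
apply: simple_outer.2 => //.
by rewrite (fconnect_sym node_inj) in xy; apply: connect_trans xy xy0.
Qed.

Lemma nb_C_fcard : nb_C face o = fcard node onC.
Proof.
rewrite -[RHS]muln1 -(card_fclosed_uniform node_inj fclosed_onC card_outer_at).
apply: eq_card => x; rewrite !inE andb_idl // => ox.
by apply/existsP; exists x; rewrite connect0 andbT.
Qed.

Lemma card_inner_reflex_at_le1 x :
  #|[predI fconnect node x & inner_reflex]| <= 1.
Proof.
have -> : #|[predI fconnect node x & inner_reflex]| =
          #|[pred y | fconnect node x y && interior face o y && r y]|.
  by apply: eq_card => y; rewrite !inE andbA.
by case: (boolP (x \in onC)) => [/reflex_on_C | /reflex_off_C ->].
Qed.

Lemma card_inner_reflex_at x :
  x \in reflex_at -> #|[predI fconnect node x & inner_reflex]| = 1.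
Proof.
case/existsP => y /andP[ry xy].
apply/eqP; rewrite eqn_leq card_inner_reflex_at_le1.
by apply/card_gt0P; exists y; rewrite !inE xy.
Qed.

Lemma card_reflex_off_C : #|[predD inner_reflex & onC]| = fcard node [predC onC].
Proof.
have cl := predC_closed fclosed_onC.
rewrite -[RHS]muln1 -(card_fclosed_uniform node_inj (P := inner_reflex) cl)
  => [|x /reflex_off_C <-].
  by apply: eq_card => y; rewrite !inE andbC.
by apply: eq_card => y; rewrite !inE andbA.
Qed.

Lemma card_reflex_on_C :
  #|[predI inner_reflex & onC]| = nb_reflex_inside node face o r.
Proof.
(* Both sides count the vertices of C carrying an interior reflex angle. *)
pose A := [predI onC & reflex_at].
have clA : fclosed node A := fclosedI fclosed_onC fclosed_reflex_at.
transitivity (fcard node A * 1).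
  rewrite -(card_fclosed_uniform node_inj (P := inner_reflex) clA)
    => [|x /andP[_ /card_inner_reflex_at //]].
  apply: eq_card => y; rewrite !inE.
  apply/idP/idP => [/andP[iry Cy] | /andP[/andP[Cy _] iry]].
    by rewrite Cy iry andbT; apply/existsP; exists y; rewrite connect0 andbT.
  by rewrite iry Cy.
rewrite -(card_fclosed_uniform node_inj (P := outerD) clA)
  => [|x /andP[/card_outer_at //]].
apply: eq_card => x; rewrite !inE andbAC; congr (_ && _).
  by rewrite andb_idl // => ox; apply/existsP; exists x; rewrite connect0 andbT.
by apply: eq_existsb => y; rewrite [LHS]andbC andbA.
Qed.

Lemma card_inner_reflex :
  #|inner_reflex| = fcard node [predC onC] + nb_reflex_inside node face o r.
Proof. by rewrite -card_reflex_on_C -card_reflex_off_C addnC cardID. Qed.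

Lemma fclosed_faces_of_size n : fclosed face (faces_of_size n).
Proof. exact: fclosedI fclosed_interior (fclosed_order_set face_inj n). Qed.

Lemma faces_of_size4 : [predD inner & order_set face 3] =i faces_of_size 4.
Proof.
move=> x; rewrite !inE andbC; case: (boolP (x \in inner)) => //= ix.
by have := face_size ix; rewrite !inE => /orP[] /eqP ->.
Qed.

Lemma nb_triangles_fcard : nb_triangles face o = fcard face (faces_of_size 3).
Proof. by []. Qed.

Lemma card_faces_of_size n :
  #|faces_of_size n| = fcard face (faces_of_size n) * n.
Proof.
rewrite (fcard_order_set face_inj) //; last exact: fclosed_faces_of_size.
by apply/subsetP => x /andP[].
Qed.

Lemma card_interior : #|inner| = nb_triangles face o * 3 + nb_quads * 4.
Proof.
rewrite -(cardID (order_set face 3)) (eq_card faces_of_size4).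
by rewrite nb_triangles_fcard -!card_faces_of_size.
Qed.

Lemma fcard_interior : fcard face inner = nb_triangles face o + nb_quads.
Proof.
by rewrite (fcardID _ (order_set face 3)) (eq_n_comp_r faces_of_size4).
Qed.

Lemma card_interior_convex : #|[predD inner & r]| = fcard face inner * 3.
Proof.
rewrite -(card_fclosed_uniform face_inj (P := predC r) fclosed_interior).
  by apply: eq_card => x; rewrite !inE andbC.
by move=> x /face_convex <-; apply: eq_card => y; rewrite !inE.
Qed.

Lemma fcard_faces : fcard face (predT : pred D) = 1 + fcard face inner.
Proof. by rewrite -fcard_outer -(n_compC outerD). Qed.

Lemma card_darts_split : #|D| = nb_C face o + #|inner|.
Proof. by rewrite -(cardC outerD). Qed.

Lemma triangle_count :
  nb_triangles face o + 2 * nb_reflex_inside node face o r + 2 = nb_C face o.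
Proof.
have := euler; rewrite /genus0 (n_compC onC) fcard_faces -nb_C_fcard.
have := card_darts; have := card_darts_split; have := card_interior.
have := fcard_interior; have := card_interior_convex; have := card_inner_reflex.
have : #|inner_reflex| + #|[predD inner & r]| = #|inner| := cardID r inner.
lia.
Qed.
End PPTCount.

Local Open Scope ring_scope.

Theorem corollary1 (D : finType) (edge node face : D -> D) (o : D) (r : pred D) :
  comb_4PPT_interior edge node face o r ->
  (nb_triangles face o)%:Z =
    (nb_C face o)%:Z - 2 * (nb_reflex_inside node face o r)%:Z - 2.
Proof.
case=> [[[edgeK _ euler plainD _] simple_outer]
         face_size convex reflex_off reflex_on].
have := triangle_count edgeK euler plainD simple_outer face_size convex
  reflex_off reflex_on.
lia.
Qed.
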